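(* Let $\mathcal D=(A,D)$ be a dependence alphabet, $\mathcal P=(Q,\Delta)$ a saturated trace-pushdown system, and $c,d$ configurations of $\mathcal P$ with $c\vdash^*_{\mathcal P}d$. Then there exist $m\le\mathrm{TI}(\mathcal D)$ and a sequence $\overline T=(T_1,\ldots,T_m)$ of twin classes $T_i\in\mathrm{twins}(\mathcal D)$ such that $(c,d)\in\ \Vdash_{\overline T}\circ\vdash_\varepsilon^*$.
   Context: A dependence alphabet is $\mathcal D=(A,D)$, $A$ finite, $D\subseteq A\times A$ reflexive and symmetric. $D(B)=\{c\mid\exists b\in B:(b,c)\in D\}$, $D(a)=D(\{a\})$, $D(w)=D(\text{letters of }w)$. Letters $a,b$ independent if $(a,b)\notin D$; $u\parallel v$ if every letter of $u$ is independent of every letter of $v$. $\sim$ is the least congruence on $A^*$ with $ab\sim ba$ for independent $a,b$; $\mathbb M(\mathcal D)=A^*/{\sim}$, $[w]$ the class of $w$. $\mathrm{twins}(a)=\{b\mid D(b)=D(a)\}$, $\mathrm{twins}(\mathcal D)=\{\mathrm{twins}(a)\mid a\in A\}$, $\mathrm{TI}(\mathcal D)=|\mathrm{twins}(\mathcal D)|$. A pushdown system $\mathcal P=(Q,\Delta)$, $Q$ finite, $\Delta\subseteq Q\times A\times A^*\times Q$ finite; configurations $Q\times\mathbb M(\mathcal D)$; $(p,s)\vdash_{\mathcal P}(q,t)$ iff there are $(p,a,w,q)\in\Delta$, $x\in A^*$ with $s=[ax]$, $t=[wx]$. It is a trace-pushdown system if (P1) $D(w)\subseteq D(a)$ for all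 $(p,a,w,q)\in\Delta$ and (P2') whenever $(p,a,v,q),(q,b,w,r)\in\Delta$ with $av\parallel bw$ there is $q'$ with $(p,b,w,q'),(q',a,v,r)\in\Delta$. It is saturated if $(p,a,ubv,q),(q,b,\varepsilon,r)\in\Delta$ with $b\in A$, $u,v\in A^*$, $u\parallel b$ implies $(p,a,uv,r)\in\Delta$. Let $\Delta_\varepsilon=\Delta\cap(Q\times A\times\{\varepsilon\}\times Q)$ and, for $T\in\mathrm{twins}(\mathcal D)$, $\Delta_T=\Delta\cap(Q\times T\times A^+\times Q)$; $\vdash_\varepsilon$ and $\vdash_T$ are the one-step relations of $(Q,\Delta_\varepsilon)$ and $(Q,\Delta_T)$. Relations are composed left to right ($R_1\circ R_2=\{(x,z)\mid\exists y:(x,y)\in R_1,(y,z)\in R_2\}$). Define $\Vdash_T=\vdash_\varepsilon^*\circ\vdash_T^+$ and $\Vdash_{(T_1,\ldots,T_m)}=\Vdash_{T_1}\circ\cdots\circ\Vdash_{T_m}$ (the identity relation if $m=0$). *)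

From mathcomp Require Import all_boot.
Set Implicit Arguments. Unset Strict Implicit. Unset Printing Implicit Defensive.

Section TracePushdown.
Variables (A Q : finType) (D : rel A).

Definition par (u v : seq A) : bool := all (fun x => all (fun y => ~~ D x y) v) u.

Inductive tr : seq A -> seq A -> Prop :=
| tr_swap a b : ~~ D a b -> tr [:: a; b] [:: b; a]
| tr_refl u : tr u u
| tr_sym u v : tr u v -> tr v u
| tr_trans u v w : tr u v -> tr v w -> tr u w
| tr_cat u u' v v' : tr u u' -> tr v v' -> tr (u ++ v) (u' ++ v').

Definition Dset (w : seq A) : pred A := fun c => has (fun b => D b c) w.

Definition rule := (Q * A * seq A * Q)%type.

(* configurations: a state and a word representing a trace; two representatives
   denote the same configuration iff [confeq] *)
Definition conf := (Q * seq A)%type.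
Definition confeq (c d : conf) : Prop := c.1 = d.1 /\ tr c.2 d.2.

Definition step (Delta : seq rule) (c d : conf) : Prop :=
  exists a w x, (c.1, a, w, d.1) \in Delta /\ tr c.2 (a :: x) /\ tr d.2 (w ++ x).

Inductive star (R : conf -> conf -> Prop) : conf -> conf -> Prop :=
| star_refl c d : confeq c d -> star R c d
| star_step c e d : R c e -> star R e d -> star R c d.

Definition rplus (R : conf -> conf -> Prop) (c d : conf) : Prop :=
  exists e, R c e /\ star R e d.

Definition rcomp (R1 R2 : conf -> conf -> Prop) (c d : conf) : Prop :=
  exists e, R1 c e /\ R2 e d.

Definition trace_pushdown (Delta : seq rule) : Prop :=
  (forall p a w q, (p, a, w, q) \in Delta -> forall c, Dset w c -> D a c) /\
  (forall p a v q b w r, (p, a, v, q) \in Delta -> (q, b, w, r) \in Delta ->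
     par (a :: v) (b :: w) ->
     exists q', (p, b, w, q') \in Delta /\ (q', a, v, r) \in Delta).

Definition saturated (Delta : seq rule) : Prop :=
  forall p a u b v q r, (p, a, u ++ b :: v, q) \in Delta -> (q, b, [::], r) \in Delta ->
    par u [:: b] -> (p, a, u ++ v, r) \in Delta.

Definition twins (a : A) : {set A} := [set b | [forall c, D b c == D a c]].
Definition twinsD : {set {set A}} := [set twins a | a in A].
Definition TI : nat := #|twinsD|.

Definition Delta_eps (Delta : seq rule) : seq rule :=
  [seq r <- Delta | r.1.2 == [::]].
Definition Delta_T (Delta : seq rule) (T : {set A}) : seq rule :=
  [seq r <- Delta | (r.1.1.2 \in T) && (r.1.2 != [::])].

Definition step_eps Delta := step (Delta_eps Delta).
Definition step_T Delta T := step (Delta_T Delta T).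

Definition Vdash (Delta : seq rule) (T : {set A}) : conf -> conf -> Prop :=
  rcomp (star (step_eps Delta)) (rplus (step_T Delta T)).

Fixpoint Vdash_seq (Delta : seq rule) (Ts : seq {set A}) : conf -> conf -> Prop :=
  match Ts with
  | [::] => confeq
  | T :: Ts' => rcomp (Vdash Delta T) (Vdash_seq Delta Ts')
  end.

End TracePushdown.

(* Label the letters on the stack so that individual occurrences can be
   tracked, and fix a run from c to d that is shortest among the runs
   using only its own twin classes.  In such a run, saturation and (P2') show
   that what a non-erasing transition s pushes keeps descendants forever, and
   that every later transition whose popped letter is a twin of the one popped
   by s pops one of these descendants.  Hence every later transition of the
   twin class T of s commutes with the transitions before it that are not
   themselves non-erasing T-transitions, so all of them can be gathered into a
   block right after s, which is preceded by erasing transitions only.  The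
   rest of the run no longer uses T, so recursion uses each twin class at most
   once. *)

From mathcomp Require Import all_boot.
From Stdlib Require Import Classical.
Set Implicit Arguments. Unset Strict Implicit. Unset Printing Implicit Defensive.

Lemma has_split_first (T : Type) (p : pred T) s : has p s ->
  exists s1 x s2, [/\ s = s1 ++ x :: s2, ~~ has p s1 & p x].
Proof. by case/split_find=> x s1 s2 px hs1; exists s1, x, s2; rewrite cat_rcons. Qed.

Lemma mem_split_first (T : eqType) (x : T) s : x \in s ->
  exists s1 s2, s = s1 ++ x :: s2 /\ x \notin s1.
Proof.
rewrite -has_pred1 => /has_split_first [s1 [y [s2 [-> hs1 /eqP ->]]]].
by exists s1, s2; rewrite -has_pred1.
Qed.

Lemma nonnil_mem (T : eqType) (s : seq T) : s != [::] -> exists x, x \in s.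
Proof. by case: s => // x s _; exists x; rewrite mem_head. Qed.

Lemma map_split (T1 T2 : Type) (f : T1 -> T2) (s : seq T1) s1 y s2 :
  map f s = s1 ++ y :: s2 ->
  exists t1 z t2, [/\ s = t1 ++ z :: t2, map f t1 = s1, f z = y & map f t2 = s2].
Proof.
elim: s1 s => [|a s1 IH] [|x s] //= [e1 e2]; first by exists [::], x, s.
have [t1 [z [t2 [-> h1 h2 h3]]]] := IH _ e2.
by exists (x :: t1), z, t2; rewrite /= h1 e1.
Qed.

Lemma uniq_cat_sep (l1 l2 : seq nat) N : uniq l1 -> uniq l2 ->
  all (fun i => i < N) l1 -> all (fun i => N <= i) l2 -> uniq (l1 ++ l2).
Proof.
move=> u1 u2 /allP h1 /allP h2; rewrite cat_uniq u1 u2 andbT /=.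
by apply/hasP=> -[i /h2 i2 /h1]; rewrite ltnNge i2.
Qed.

Lemma ex_minimal_size (T : Type) (P : seq T -> Prop) s :
  P s -> exists s0, P s0 /\ forall s', P s' -> size s0 <= size s'.
Proof.
have [n] := ubnP (size s); elim: n s => // n IH s lt_s Ps.
have [[s' [Ps' lt_s']]|H] := classic (exists s', P s' /\ size s' < size s).
  exact: IH s' (leq_trans lt_s' lt_s) Ps'.
exists s; split=> // s' Ps'; rewrite leqNgt; apply/negP=> lt_s'.
by apply: H; exists s'.
Qed.

Section Projection.
Variables (X : eqType) (DX : rel X).
Hypotheses (DXr : reflexive DX) (DXs : symmetric DX).

(* Projection lemma: two words are trace equivalent iff their projections to
   every pair of dependent letters coincide.  Unlike [tr], this is meaningful
   over an arbitrary eqType, e.g. for words of labelled letters. *)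
Definition proj_eq (u v : seq X) :=
  forall x y, DX x y -> filter (pred2 x y) u = filter (pred2 x y) v.

Lemma proj_eq_refl u : proj_eq u u. Proof. by []. Qed.

Lemma proj_eq_sym u v : proj_eq u v -> proj_eq v u.
Proof. by move=> h x y d; rewrite h. Qed.

Lemma proj_eq_trans u v w : proj_eq u v -> proj_eq v w -> proj_eq u w.
Proof. by move=> h1 h2 x y d; rewrite h1 // h2. Qed.

Lemma proj_eq_cat u u' v v' :
  proj_eq u u' -> proj_eq v v' -> proj_eq (u ++ v) (u' ++ v').
Proof. by move=> h1 h2 x y d; rewrite !filter_cat h1 // h2. Qed.

Lemma proj_eq_cons a u v : proj_eq u v -> proj_eq (a :: u) (a :: v).
Proof. exact: (@proj_eq_cat [:: a] [:: a]). Qed.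

Lemma proj_eq_consK a u v : proj_eq (a :: u) (a :: v) -> proj_eq u v.
Proof. by move=> h x y d; have /= := h x y d; case: ifP => // _ [->]. Qed.

Lemma proj_eq_swap a b u : ~~ DX a b -> proj_eq (a :: b :: u) (b :: a :: u).
Proof.
move=> nab x y dxy /=.
case Ha: ((a == x) || (a == y)); case Hb: ((b == x) || (b == y)) => //; exfalso.
move: Ha Hb nab => /orP[]/eqP-> /orP[]/eqP->;
  by rewrite ?DXr ?dxy // DXs dxy.
Qed.

Lemma proj_eq_bubble a u v :
  all (fun z => ~~ DX a z) u -> proj_eq (u ++ a :: v) (a :: u ++ v).
Proof.
elim: u => [|z u IH] //= /andP[nz hu].
apply: proj_eq_trans (proj_eq_cons z (IH hu)) _.
exact/proj_eq_sym/proj_eq_swap.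
Qed.

Lemma proj_eq_catC u v :
  all (fun x => all (fun y => ~~ DX x y) v) u -> proj_eq (u ++ v) (v ++ u).
Proof.
elim: u => [|x u IH] /=; first by rewrite cats0.
case/andP=> hx hu; apply: proj_eq_trans (proj_eq_cons x (IH hu)) _.
exact/proj_eq_sym/proj_eq_bubble.
Qed.

Lemma proj_eq_perm u v : proj_eq u v -> perm_eq u v.
Proof.
move=> h; apply/allP=> z _; apply/eqP.
have cnt s : count_mem z s = size (filter (pred2 z z) s).
  by rewrite size_filter; apply: eq_count => w /=; rewrite orbb.
by rewrite !cnt h.
Qed.

Lemma proj_eq_mem u v : proj_eq u v -> u =i v.
Proof. by move/proj_eq_perm/perm_mem. Qed.

Lemma proj_eq_indep_prefix u b v : proj_eq u (b :: v) -> forall s1 s2,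
  u = s1 ++ b :: s2 -> b \notin s1 -> all (fun z => ~~ DX b z) s1.
Proof.
move=> h s1 s2 eu nb1; apply/allP=> z z1; apply/negP=> dbz.
have e1 : filter (pred2 b z) s1 = filter (pred1 z) s1.
  apply: eq_in_filter => w w1 /=.
  by case: eqP => [ewb|_]; [by move: nb1; rewrite -ewb w1|].
have := h b z dbz; rewrite eu filter_cat e1 /= eqxx.
have zf : z \in filter (pred1 z) s1 by rewrite mem_filter /= eqxx.
case E: (filter (pred1 z) s1) => [|z' t]; first by rewrite E in zf.
have : z' \in filter (pred1 z) s1 by rewrite E mem_head.
by rewrite mem_filter => /andP[/eqP-> _] [ezb]; move: nb1; rewrite -ezb z1.
Qed.

Lemma proj_eq_extract u Y b Z : proj_eq (u ++ Y) (b :: Z) -> b \notin u ->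
  exists Y1 Y2, [/\ Y = Y1 ++ b :: Y2, all (fun z => ~~ DX b z) (u ++ Y1)
                & proj_eq Z (u ++ Y1 ++ Y2)].
Proof.
move=> h nbu.
have: b \in u ++ Y by rewrite (proj_eq_mem h) mem_head.
rewrite mem_cat (negbTE nbu) /= => /mem_split_first [Y1 [Y2 [eY nb1]]].
have hall : all (fun z => ~~ DX b z) (u ++ Y1).
  apply: (proj_eq_indep_prefix h (s2 := Y2)); first by rewrite eY catA.
  by rewrite mem_cat negb_or nbu.
exists Y1, Y2; split=> //; apply: (@proj_eq_consK b).
apply: proj_eq_trans (proj_eq_sym h) _; rewrite eY !catA.
exact: proj_eq_bubble.
Qed.

End Projection.

Section Traces.
Variables (A : finType) (D : rel A).
Hypotheses (Drefl : reflexive D) (Dsym : symmetric D).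

Lemma tr_proj_eq u v : tr D u v -> proj_eq D u v.
Proof.
elim=> {u v} [a b n|u|u v _ h|u v w _ h1 _ h2|u u' v v' _ h1 _ h2].
- exact: (proj_eq_swap Drefl Dsym [::] n).
- exact: proj_eq_refl.
- exact: proj_eq_sym.
- exact: proj_eq_trans h1 h2.
- exact: proj_eq_cat.
Qed.

Lemma tr_bubble a u v : all (fun z => ~~ D a z) u -> tr D (a :: u ++ v) (u ++ a :: v).
Proof.
elim: u => [|z u IH] /=; first by move=> _; apply: tr_refl.
case/andP=> nz hu; apply: tr_trans (_ : tr D (z :: a :: u ++ v) _).
  by apply: (@tr_cat _ _ [:: a; z] [:: z; a]); [apply: tr_swap|apply: tr_refl].
exact: (@tr_cat _ _ [:: z] [:: z] _ _ (tr_refl _ _) (IH hu)).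
Qed.

Lemma proj_eq_tr_map (X : eqType) (DX : rel X) (f : X -> A) u v :
  (forall x y, DX x y = D (f x) (f y)) -> proj_eq DX u v -> tr D (map f u) (map f v).
Proof.
move=> hf; have DXr : reflexive DX by move=> x; rewrite hf.
have DXs : symmetric DX by move=> x y; rewrite !hf.
elim: u v => [|a u IH] v h.
  by have := proj_eq_perm DXr h; rewrite perm_sym => /perm_nilP ->; apply: tr_refl.
have [Y1 [Y2 [-> hall hz]]] := @proj_eq_extract _ _ DXr DXs [::] v a u (proj_eq_sym h) isT.
rewrite map_cat /=; apply: tr_trans (_ : tr D (f a :: map f Y1 ++ map f Y2) _).
  by rewrite -map_cat; apply: (@tr_cat _ _ [:: f a] [:: f a] _ _ (tr_refl _ _) (IH _ hz)).
by apply: tr_bubble; rewrite all_map; apply: sub_all hall => z /=; rewrite hf.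
Qed.

Lemma proj_eq_tr u v : proj_eq D u v -> tr D u v.
Proof. by move=> h; rewrite -(map_id u) -(map_id v); apply: proj_eq_tr_map h. Qed.

Lemma twinsP a b : reflect (forall c, D b c = D a c) (b \in twins D a).
Proof. by rewrite inE; apply: (iffP forallP) => h c; apply/eqP. Qed.

Lemma twins_self a : a \in twins D a.
Proof. exact/twinsP. Qed.

Lemma twins_twinsD a : twins D a \in twinsD D.
Proof. exact: imset_f. Qed.

End Traces.

Section LabelledRuns.
Variables (A Q : finType) (D : rel A).
Hypotheses (Drefl : reflexive D) (Dsym : symmetric D).
Variable Delta : seq (rule A Q).
Hypotheses (Htp : trace_pushdown D Delta) (Hsat : saturated D Delta).

(* Occurrences of letters carry a [nat] label, so that the individual letters
   of a stack can be tracked along a run. *)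
Definition occ := (A * nat)%type.
Definition Docc : rel occ := fun x y => D x.1 y.1.

Lemma Docc_refl : reflexive Docc. Proof. by move=> x; apply: Drefl. Qed.
Lemma Docc_sym : symmetric Docc. Proof. by move=> x y; apply: Dsym. Qed.

Local Notation lproj_eq := (proj_eq Docc).

Lemma lproj_eq_perm U V : lproj_eq U V -> perm_eq U V.
Proof. exact: (proj_eq_perm Docc_refl). Qed.

Lemma lproj_eq_mem U V : lproj_eq U V -> U =i V.
Proof. exact: (proj_eq_mem Docc_refl). Qed.

Lemma lproj_eq_map U V : lproj_eq U V -> tr D (map fst U) (map fst V).
Proof. exact: proj_eq_tr_map. Qed.

Definition lconf := (Q * seq occ)%type.
Definition unl (C : lconf) : conf A Q := (C.1, map fst C.2).
Definition lconf_eq (C C' : lconf) := C.1 = C'.1 /\ lproj_eq C.2 C'.2.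

Definition ltrans := (rule A Q * occ * seq occ)%type.
Definition lrule (s : ltrans) : rule A Q := s.1.1.
Definition lpop (s : ltrans) : occ := s.1.2.
Definition lpush (s : ltrans) : seq occ := s.2.
Definition lkey (s : ltrans) := (lpop s, lpush s).

Definition lstep (C : lconf) (s : ltrans) (C' : lconf) :=
  [/\ lrule s \in Delta, lrule s = (C.1, (lpop s).1, map fst (lpush s), C'.1) &
      exists Xs, lproj_eq C.2 (lpop s :: Xs) /\ lproj_eq C'.2 (lpush s ++ Xs)].

Inductive lrun : lconf -> seq ltrans -> lconf -> Prop :=
| lrun_nil C C' : lconf_eq C C' -> lrun C [::] C'
| lrun_cons C C1 C' s ss : lstep C s C1 -> lrun C1 ss C' -> lrun C (s :: ss) C'.

Lemma lconf_eq_refl C : lconf_eq C C. Proof. by split. Qed.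

Lemma lconf_eq_sym C C' : lconf_eq C C' -> lconf_eq C' C.
Proof. by case=> h1 h2; split; [rewrite h1|apply: proj_eq_sym]. Qed.

Lemma lconf_eq_trans C1 C2 C3 : lconf_eq C1 C2 -> lconf_eq C2 C3 -> lconf_eq C1 C3.
Proof. by case=> h1 h2 [h3 h4]; split; [rewrite h1|apply: proj_eq_trans h4]. Qed.

Lemma lrun_nilE C C' : lrun C [::] C' -> lconf_eq C C'.
Proof. by move=> h; inversion h. Qed.

Lemma lrun_consE C s ss C' :
  lrun C (s :: ss) C' -> exists C1, lstep C s C1 /\ lrun C1 ss C'.
Proof. by move=> h; inversion h; subst; exists C1. Qed.

Lemma lstep_eql C0 C s C1 : lconf_eq C0 C -> lstep C s C1 -> lstep C0 s C1.
Proof.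
case=> e1 e2 [h1 h2 [Xs [h3 h4]]]; split=> //; first by rewrite e1.
by exists Xs; split=> //; apply: proj_eq_trans h3.
Qed.

Lemma lrun_eql C0 C ss C' : lconf_eq C0 C -> lrun C ss C' -> lrun C0 ss C'.
Proof.
move=> e h; case: h e => [C1 C2 e2|C1 C2 C3 s ss' h1 h2] e.
  exact: lrun_nil (lconf_eq_trans e e2).
exact: lrun_cons (lstep_eql e h1) h2.
Qed.

Lemma lrun_cat C s1 s2 C' :
  lrun C (s1 ++ s2) C' <-> exists Cm, lrun C s1 Cm /\ lrun Cm s2 C'.
Proof.
split.
  elim: s1 C => [|s s1 IH] C /=.
    by move=> h; exists C; split=> //; apply/lrun_nil/lconf_eq_refl.
  case/lrun_consE=> C1 [h1 /IH [Cm [h2 h3]]].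
  by exists Cm; split=> //; apply: lrun_cons h1 h2.
case=> Cm [h1 h2]; elim: s1 C h1 => [|s s1 IH] C /= h1.
  exact: lrun_eql (lrun_nilE h1) h2.
by case/lrun_consE: h1 => C1 [h3 h4]; apply: lrun_cons h3 (IH _ h4).
Qed.

Lemma lstep_det C s C1 C2 : lstep C s C1 -> lstep C s C2 -> lconf_eq C1 C2.
Proof.
case=> _ h2 [X1 [h3 h4]] [_ h5 [X2 [h6 h7]]]; split.
  by move: h5; rewrite h2 => -[].
apply: proj_eq_trans h4 (proj_eq_trans _ (proj_eq_sym h7)).
apply/proj_eq_cat/(@proj_eq_consK _ _ (lpop s)); first exact: proj_eq_refl.
exact: proj_eq_trans (proj_eq_sym h3) h6.
Qed.

Lemma lrun_det C ss C1 C2 : lrun C ss C1 -> lrun C ss C2 -> lconf_eq C1 C2.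
Proof.
move=> h; elim: h C2 => [Ca Cb e|Ca Cb Cc s ss' h1 h2 IH] C2.
  by move/lrun_nilE; apply: lconf_eq_trans; apply: lconf_eq_sym.
case/lrun_consE=> C1' [h3 h4]; apply/IH/(lrun_eql _ h4).
exact: lstep_det h1 h3.
Qed.

Lemma lpop_mem C s C1 : lstep C s C1 -> lpop s \in C.2.
Proof. by case=> _ _ [Xs [h1 _]]; rewrite (lproj_eq_mem h1) mem_head. Qed.

Lemma lpush_mem C s C1 z : lstep C s C1 -> z \in lpush s -> z \in C1.2.
Proof. by case=> _ _ [Xs [_ h2]]; rewrite (lproj_eq_mem h2) mem_cat => ->. Qed.

Lemma lstep_mem_keep C s C1 z : lstep C s C1 -> z \in C.2 -> z != lpop s -> z \in C1.2.
Proof.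
case=> _ _ [Xs [h1 h2]]; rewrite (lproj_eq_mem h2) (lproj_eq_mem h1) mem_cat in_cons.
by case/orP=> [/eqP->|->]; rewrite ?eqxx ?orbT.
Qed.

Lemma lstep_mem C s C1 z : lstep C s C1 -> uniq C.2 -> z \in C1.2 ->
  z \in lpush s \/ (z \in C.2 /\ z != lpop s).
Proof.
case=> _ _ [Xs [h1 h2]] u; rewrite (lproj_eq_mem h2) mem_cat.
case/orP=> [->|zX]; [by left|right].
rewrite (lproj_eq_mem h1) in_cons zX orbT; split=> //.
rewrite (perm_uniq (lproj_eq_perm h1)) /= in u.
by apply/eqP=> ez; move: u; rewrite -ez zX.
Qed.

Definition fresh (C : lconf) (ss : seq ltrans) := uniq (C.2 ++ flatten (map lpush ss)).

Lemma lstep_uniq C s C1 rest :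
  lstep C s C1 -> uniq (C.2 ++ lpush s ++ rest) -> uniq (C1.2 ++ rest).
Proof.
case=> _ _ [Xs [h1 h2]] u.
rewrite (perm_uniq (perm_cat (lproj_eq_perm h2) (perm_refl rest))) -catA.
rewrite (perm_uniq (perm_cat (lproj_eq_perm h1) (perm_refl _))) /= in u.
by case/andP: u => _; rewrite uniq_catCA.
Qed.

Lemma fresh_uniq C ss : fresh C ss -> uniq C.2.
Proof. by rewrite /fresh cat_uniq => /andP[]. Qed.

Lemma fresh_uniq_push C s ss : fresh C (s :: ss) -> uniq (C.2 ++ lpush s).
Proof. by rewrite /fresh /= catA cat_uniq => /andP[]. Qed.

Lemma fresh_cons C s ss C1 : lstep C s C1 -> fresh C (s :: ss) -> fresh C1 ss.
Proof. exact: lstep_uniq. Qed.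

Lemma fresh_catr C pre post Cm : lrun C pre Cm -> fresh C (pre ++ post) -> fresh Cm post.
Proof.
elim: pre C => [|s pre IH] C /=.
  case/lrun_nilE=> _ e; rewrite /fresh => u.
  by rewrite (perm_uniq (perm_cat (lproj_eq_perm (proj_eq_sym e)) (perm_refl _))).
by case/lrun_consE=> C1 [h1 h2] u; apply: IH h2 (fresh_cons h1 u).
Qed.

Lemma fresh_catl C pre post : fresh C (pre ++ post) -> fresh C pre.
Proof. by rewrite /fresh map_cat flatten_cat catA cat_uniq => /andP[]. Qed.

Lemma fresh_disj C s ss x z :
  fresh C (s :: ss) -> x \in ss -> z \in lpush s -> z \notin lpush x.
Proof.
rewrite /fresh /= => u xs zW; apply/negP=> zx.
move: u; rewrite cat_uniq => /and3P[_ _]; rewrite cat_uniq => /and3P[_ /hasP[]].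
by exists z => //; apply/flatten_mapP; exists x.
Qed.

Lemma fresh_perm C ss ss' :
  fresh C ss -> perm_eq (map lkey ss) (map lkey ss') -> fresh C ss'.
Proof.
have e l : map lpush l = map snd (map lkey l) by rewrite -map_comp.
rewrite /fresh !e => u p.
by rewrite -(perm_uniq (perm_cat (perm_refl _) (perm_flatten (perm_map snd p)))).
Qed.

Lemma filter_pred2_l (x y : occ) s :
  uniq s -> x \in s -> y \notin s -> filter (pred2 x y) s = [:: x].
Proof.
move=> u xs ys; rewrite -(filter_pred1_uniq u xs); apply: eq_in_filter => z zs /=.
by case: (eqVneq z y) => [ezy|_]; [rewrite -ezy zs in ys|rewrite orbF].
Qed.

Lemma filter_pred2_nil (x y : occ) s :
  x \notin s -> y \notin s -> filter (pred2 x y) s = [::].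
Proof.
move=> xs ys; rewrite -(filter_pred0 s); apply: eq_in_filter => z zs /=.
by apply/negbTE/negP=> /orP[]/eqP ez; [move: xs|move: ys]; rewrite -ez zs.
Qed.

(* The stack [U] holds the dependent occurrences [x] and [y], with [x] nearer
   to the top (the head), so [y] cannot be popped before [x]. *)
Definition above (U : seq occ) (x y : occ) :=
  [&& x != y, Docc x y & filter (pred2 x y) U == [:: x; y]].

Lemma above_proj_eq U V x y : lproj_eq U V -> above U x y = above V x y.
Proof. by rewrite /above => h; case d: (Docc x y); rewrite ?andbF //= h. Qed.

Lemma above_antisym U x y : above U x y -> above U y x -> False.
Proof.
case/and3P=> nxy _ /eqP h1 /and3P[_ _ /eqP h2].
have e : filter (pred2 y x) U = filter (pred2 x y) U.
  by apply: eq_filter => z /=; rewrite orbC.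
by move: h2; rewrite e h1 => -[exy]; rewrite exy eqxx in nxy.
Qed.

Lemma lpop_above C s C1 z : lstep C s C1 -> uniq C.2 -> z \in C.2 -> z != lpop s ->
  Docc (lpop s) z -> above C.2 (lpop s) z.
Proof.
case=> _ _ [Xs [h1 _]] u zC nz d; rewrite (above_proj_eq _ _ h1) /above eq_sym nz d /=.
rewrite (perm_uniq (lproj_eq_perm h1)) /= in u; case/andP: u => nX uX.
rewrite (lproj_eq_mem h1) in_cons (negbTE nz) /= in zC.
have e : filter (pred2 (lpop s) z) Xs = filter (pred2 z (lpop s)) Xs.
  by apply: eq_filter => w /=; rewrite orbC.
by rewrite eqxx /= e filter_pred2_l.
Qed.

Lemma above_lstep C s C1 x y : lstep C s C1 -> uniq (C.2 ++ lpush s) ->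
  x \notin lpush s -> x != lpop s -> y != lpop s -> above C1.2 x y ->
  y \notin lpush s /\ above C.2 x y.
Proof.
move=> hs u xW xo yo; have [_ _ [Xs [h1 h2]]] := hs.
have uW : uniq (lpush s).
  have := lstep_uniq hs (rest := [::]); rewrite !cats0 => /(_ u).
  by rewrite (perm_uniq (lproj_eq_perm h2)) cat_uniq => /andP[].
rewrite (above_proj_eq _ _ h2) => /and3P[nxy dxy /eqP ab].
have yW : y \notin lpush s.
  apply/negP=> yW; move: ab; rewrite filter_cat.
  have e : filter (pred2 x y) (lpush s) = filter (pred2 y x) (lpush s).
    by apply: eq_filter => w /=; rewrite orbC.
  by rewrite e filter_pred2_l // => -[exy]; rewrite exy eqxx in nxy.
split=> //; rewrite (above_proj_eq _ _ h1) /above nxy dxy /=.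
rewrite ![lpop s == _]eq_sym (negbTE xo) (negbTE yo) /=.
by rewrite -ab filter_cat filter_pred2_nil.
Qed.

Definition Dle (a b : A) := forall c, D a c -> D b c.

Lemma rule_Dle p a w q y : (p, a, w, q) \in Delta -> y \in w -> Dle y a.
Proof.
move=> h yw c dyc; case: Htp => P1 _.
by apply: (P1 _ _ _ _ h c); apply/hasP; exists y.
Qed.

Lemma lpush_Dle C s C1 z : lstep C s C1 -> z \in lpush s -> Dle z.1 (lpop s).1.
Proof. by case=> h1 e _ zW; rewrite e in h1; apply: rule_Dle h1 (map_f _ zW). Qed.

Definition desc_step (Dd : seq occ) (s : ltrans) :=
  [seq z <- Dd | z != lpop s] ++ (if lpop s \in Dd then lpush s else [::]).
Definition desc Dd (ss : seq ltrans) := foldl desc_step Dd ss.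

Lemma desc_cat Dd s1 s2 : desc Dd (s1 ++ s2) = desc (desc Dd s1) s2.
Proof. exact: foldl_cat. Qed.

Lemma desc_rcons Dd ss s : desc Dd (rcons ss s) = desc_step (desc Dd ss) s.
Proof. by rewrite -cats1 desc_cat. Qed.

Lemma mem_desc_step Dd s z : (z \in desc_step Dd s) =
  ((z \in Dd) && (z != lpop s)) || ((lpop s \in Dd) && (z \in lpush s)).
Proof.
by rewrite mem_cat mem_filter andbC; case: ifP; rewrite ?andbT ?andbF ?in_nil ?orbF.
Qed.

Lemma desc_id Dd ss : all (fun y => lpop y \notin Dd) ss -> desc Dd ss = Dd.
Proof.
elim: ss => //= s ss IH /andP[h1 h2]; rewrite /desc_step (negbTE h1) cats0.
have -> : [seq z <- Dd | z != lpop s] = Dd.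
  by apply/all_filterP/allP => z zD; apply: contraNneq h1 => <-.
exact: IH.
Qed.

Lemma desc_mono D1 D2 ss : {subset D1 <= D2} -> {subset desc D1 ss <= desc D2 ss}.
Proof.
elim: ss D1 D2 => //= s ss IH D1 D2 sub; apply: IH => z.
by rewrite !mem_desc_step => /orP[/andP[/sub -> ->]|/andP[/sub -> ->]]; rewrite ?orbT.
Qed.

Lemma desc_sub Dd ss : {subset desc Dd ss <= Dd ++ flatten (map lpush ss)}.
Proof.
elim: ss Dd => [|s ss IH] Dd z /=; first by rewrite cats0.
move/IH; rewrite mem_cat mem_desc_step !mem_cat.
by case/orP=> [/orP[/andP[->]|/andP[_ ->]]|->]; rewrite ?orbT.
Qed.

Lemma desc_origin Dd pre b : b \in desc Dd pre -> b \in Dd \/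
  exists p1 x p2, [/\ pre = p1 ++ x :: p2, lpop x \in desc Dd p1 & b \in lpush x].
Proof.
elim/last_ind: pre => [|p x IH] /=; first by left.
rewrite desc_rcons mem_desc_step.
case/orP=> [/andP[/IH [bD|[p1 [y [p2 [-> h1 h2]]]]] _]|/andP[h1 h2]]; first by left.
  by right; exists p1, y, (rcons p2 x); rewrite rcons_cat.
by right; exists p, x, [::]; rewrite cats1.
Qed.

Lemma desc_Dle C ss C' Dd a : lrun C ss C' -> (forall z, z \in Dd -> Dle z.1 a) ->
  forall z, z \in desc Dd ss -> Dle z.1 a.
Proof.
move=> h; elim: h Dd => [Ca Cb _|Ca Cb Cc s ss0 h1 h2 IH] Dd hD //=.
apply: IH => z; rewrite mem_desc_step => /orP[/andP[/hD //]|/andP[/hD oD zW]].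
by move=> c /(lpush_Dle h1 zW) /oD.
Qed.

Definition up_closed (U Dd : seq occ) :=
  forall x y, x \in U -> above U x y -> y \in Dd -> x \in Dd.

Lemma up_closed_proj_eq U V Dd : lproj_eq U V -> up_closed U Dd -> up_closed V Dd.
Proof. by move=> h iv x y; rewrite -(lproj_eq_mem h) -(above_proj_eq _ _ h); apply: iv. Qed.

Lemma up_closed_step C s C1 Dd : lstep C s C1 -> uniq (C.2 ++ lpush s) ->
  {subset Dd <= C.2} -> up_closed C.2 Dd -> up_closed C1.2 (desc_step Dd s).
Proof.
move=> hs u sub iv x y xC1 ab; rewrite !mem_desc_step.
have uC : uniq C.2 by move: u; rewrite cat_uniq => /andP[].
have dis z : z \in C.2 -> z \notin lpush s.
  by move=> zC; apply/negP=> zW; move: u; rewrite cat_uniq => /and3P[_ /hasP[]]; exists z.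
have [xW|[xC xo]] := lstep_mem hs uC xC1.
  rewrite xW andbT; case: (boolP (lpop s \in Dd)) => oD; first by rewrite orbT.
  rewrite /= !orbF => /andP[yD yo]; case/negP: oD.
  have dpy : Docc (lpop s) y by case/and3P: ab => _ dxy _; apply: (lpush_Dle hs xW).
  exact: iv _ _ (lpop_mem hs) (lpop_above hs uC (sub _ yD) yo dpy) yD.
case/orP=> [/andP[yD yo]|/andP[_ yW]].
  have [_ ab'] := above_lstep hs u (dis _ xC) xo yo ab.
  by rewrite (iv _ _ xC ab' yD) xo.
have yo : y != lpop s by apply: contraTneq yW => ->; apply/dis/(lpop_mem hs).
by have [] := above_lstep hs u (dis _ xC) xo yo ab; rewrite yW.
Qed.

Lemma up_closed_push C s C1 :
  lstep C s C1 -> uniq (C.2 ++ lpush s) -> up_closed C1.2 (lpush s).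
Proof.
move=> hs u.
have uC : uniq C.2 by move: u; rewrite cat_uniq => /andP[].
have := up_closed_step hs u (Dd := [:: lpop s]).
rewrite /desc_step /= eqxx mem_seq1 eqxx; apply.
  by move=> z; rewrite mem_seq1 => /eqP->; apply: lpop_mem hs.
move=> x y xC ab; rewrite mem_seq1 => /eqP ey; subst y; exfalso.
case/and3P: (ab) => nxy dxy _.
by apply: above_antisym ab (lpop_above hs uC xC nxy _); rewrite /Docc Dsym.
Qed.

Lemma up_closed_run C ss C' Dd : lrun C ss C' -> fresh C ss ->
  {subset Dd <= C.2} -> up_closed C.2 Dd ->
  up_closed C'.2 (desc Dd ss) /\ {subset desc Dd ss <= C'.2}.
Proof.
move=> h; elim: h Dd => [Ca Cb [_ e]|Ca Cb Cc s ss0 h1 h2 IH] Dd fr sub iv /=.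
  by split; [apply: up_closed_proj_eq e iv|move=> z /sub; rewrite (lproj_eq_mem e)].
apply: IH; first exact: fresh_cons h1 fr.
  move=> z; rewrite mem_desc_step => /orP[/andP[zD zo]|/andP[_ zW]].
    exact: lstep_mem_keep h1 (sub _ zD) zo.
  exact: lpush_mem h1 zW.
exact: up_closed_step h1 (fresh_uniq_push fr) sub iv.
Qed.

Lemma up_closed_desc_push C s ss C1 C' : lstep C s C1 -> lrun C1 ss C' ->
  fresh C (s :: ss) ->
  up_closed C'.2 (desc (lpush s) ss) /\ {subset desc (lpush s) ss <= C'.2}.
Proof.
move=> hs hr fr; apply: up_closed_run hr (fresh_cons hs fr) _ _.
  by move=> z; apply: lpush_mem hs.
exact: up_closed_push hs (fresh_uniq_push fr).
Qed.

Lemma par_map (U V : seq occ) :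
  par D (map fst U) (map fst V) = all (fun x => all (fun y => ~~ Docc x y) V) U.
Proof. by rewrite /par all_map; apply: eq_all => x /=; rewrite all_map. Qed.

Lemma lpush_indep C s C1 x z :
  lstep C s C1 -> ~~ Docc x (lpop s) -> z \in lpush s -> ~~ Docc x z.
Proof.
move=> hs nx zW; apply: contra nx; rewrite /Docc !(Dsym x.1).
exact: (lpush_Dle hs zW).
Qed.

(* The commutation is provided by (P2'). *)
Lemma lrun_swap C s1 s2 ss C' : lrun C (s1 :: s2 :: ss) C' ->
  lpop s2 \notin lpush s1 -> ~~ Docc (lpop s1) (lpop s2) ->
  exists s1' s2', [/\ lrun C (s2' :: s1' :: ss) C', lkey s1' = lkey s1 & lkey s2' = lkey s2].
Proof.
case/lrun_consE=> C1 [[r1D r1e [X1 [h1 h2]]] /lrun_consE [C2 [hs2 hr]]] nbV ngb.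
have [r2D r2e [Y [h3 h4]]] := hs2.
have [Y1 [Y2 [eX1]]] :=
  proj_eq_extract Docc_refl Docc_sym (proj_eq_trans (proj_eq_sym h2) h3) nbV.
rewrite all_cat => /andP[hVb hY1] hY.
have gW : all (fun z => ~~ Docc (lpop s1) z) (lpush s2).
  by apply/allP=> z; apply: lpush_indep hs2 ngb.
have VW : all (fun x => all (fun y => ~~ Docc x y) (lpush s2)) (lpush s1).
  apply/allP=> x xV; apply/allP=> z; apply: lpush_indep hs2 _.
  by rewrite Docc_sym (allP hVb x xV).
have hpar : par D (map fst (lpop s1 :: lpush s1)) (map fst (lpop s2 :: lpush s2)).
  rewrite par_map /= ngb gW /=; apply/allP=> x xV /=.
  by rewrite Docc_sym (allP hVb x xV) (allP VW x xV).
rewrite r1e in r1D; rewrite r2e in r2D.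
have [q' [n1 n2]] := Htp.2 _ _ _ _ _ _ _ r1D r2D hpar.
exists ((q', (lpop s1).1, map fst (lpush s1), C2.1), lpop s1, lpush s1).
exists ((C.1, (lpop s2).1, map fst (lpush s2), q'), lpop s2, lpush s2); split=> //.
apply: (@lrun_cons _ (q', lpush s2 ++ lpop s1 :: Y1 ++ Y2)).
  split=> //; exists (lpop s1 :: Y1 ++ Y2); split; last exact: proj_eq_refl.
  apply: proj_eq_trans h1 _; rewrite eX1 /lpop /=.
  apply: proj_eq_trans (proj_eq_cons _ (proj_eq_bubble Docc_refl Docc_sym _ hY1)) _.
  exact: (proj_eq_swap Docc_refl Docc_sym _ ngb).
apply: lrun_cons hr; split=> //; exists (lpush s2 ++ Y1 ++ Y2); split.
  exact: (proj_eq_bubble Docc_refl Docc_sym _ gW).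
apply: proj_eq_trans h4 (proj_eq_trans (proj_eq_cat (proj_eq_refl _) hY) _).
rewrite /lpush /= !catA; apply/proj_eq_cat/proj_eq_refl/proj_eq_cat/proj_eq_refl.
exact/proj_eq_sym/(proj_eq_catC Docc_refl Docc_sym VW).
Qed.

Lemma lrun_move_front C mid f post C' : lrun C (mid ++ f :: post) C' ->
  (forall x, x \in mid -> lpop f \notin lpush x /\ ~~ Docc (lpop x) (lpop f)) ->
  exists f' mid', [/\ lrun C (f' :: mid' ++ post) C', lkey f' = lkey f
                    & map lkey mid' = map lkey mid].
Proof.
elim: mid C => [|x mid IH] C /= h hx; first by exists f, [::].
case/lrun_consE: h => C1 [h1 h2].
have [f1 [mid1 [h3 e1 e2]]] := IH C1 h2 (fun y ym => hx y (mem_behead (s := x :: mid) ym)).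
have [hx1 hx2] := hx x (mem_head _ _).
have ef : lpop f1 = lpop f by case: e1.
rewrite -ef in hx1 hx2.
have [x' [f' [h4 ex e']]] := lrun_swap (lrun_cons h1 h3) hx1 hx2.
by exists f', (x' :: mid1); rewrite /= e' e1 ex e2.
Qed.

(* Saturation absorbs the erasing transition [f] into [s]. *)
Lemma lrun_merge C s f ss C' : lrun C (s :: f :: ss) C' ->
  lpush f = [::] -> lpop f \in lpush s ->
  exists s' W1 W2, [/\ lrun C (s' :: ss) C', lpop s' = lpop s,
                       lpush s = W1 ++ lpop f :: W2 & lpush s' = W1 ++ W2].
Proof.
case/lrun_consE=> C1 [[r1D r1e [X1 [h1 h2]]] /lrun_consE [C2 [[r2D r2e [Y [h3 h4]]] h5]]] fW fin.
have [W1 [W2 [eW nb1]]] := mem_split_first fin.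
have e1 : lproj_eq C1.2 (W1 ++ lpop f :: (W2 ++ X1)) by move: h2; rewrite eW -catA.
have [Z1 [Z2 [_]]] :=
  proj_eq_extract Docc_refl Docc_sym (proj_eq_trans (proj_eq_sym e1) h3) nb1.
rewrite all_cat => /andP[hb1 _] _.
have eY : lproj_eq Y (W1 ++ W2 ++ X1).
  apply/proj_eq_sym/(@proj_eq_consK _ _ (lpop f)).
  apply: proj_eq_trans (proj_eq_sym (proj_eq_bubble Docc_refl Docc_sym _ hb1)) _.
  exact: proj_eq_trans (proj_eq_sym e1) h3.
rewrite r1e eW map_cat /= in r1D; rewrite r2e fW /= in r2D.
have hpar : par D (map fst W1) (map fst [:: lpop f]).
  by rewrite par_map; apply/allP=> z z1 /=; rewrite Docc_sym (allP hb1 z z1).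
have := Hsat r1D r2D hpar; rewrite -map_cat => hD.
exists ((C.1, (lpop s).1, map fst (W1 ++ W2), C2.1), lpop s, W1 ++ W2), W1, W2.
split=> //; apply: lrun_cons h5; split=> //; exists X1; split=> //.
by apply: proj_eq_trans h4 _; rewrite fW -catA.
Qed.

Lemma confeq_trans (c1 c2 c3 : conf A Q) : confeq D c1 c2 -> confeq D c2 c3 -> confeq D c1 c3.
Proof. by case=> e1 h1 [e2 h2]; split; [rewrite e1|apply: tr_trans h2]. Qed.

Lemma step_eql Dl (c0 c e : conf A Q) : confeq D c0 c -> step D Dl c e -> step D Dl c0 e.
Proof.
case=> e1 h [a [w [x [h1 [h2 h3]]]]]; exists a, w, x; rewrite e1.
by split=> //; split=> //; apply: tr_trans h h2.
Qed.

Lemma lstep_step Dl C s C1 :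
  lstep C s C1 -> lrule s \in Dl -> step D Dl (unl C) (unl C1).
Proof.
case=> _ e [Xs [h1 h2]] hin.
exists (lpop s).1, (map fst (lpush s)), (map fst Xs); rewrite -e; split=> //.
by split; [apply: (lproj_eq_map h1)|rewrite -map_cat; apply: lproj_eq_map].
Qed.

Lemma lrun_star Dl C ss C' : lrun C ss C' ->
  (forall s C1 C2, s \in ss -> lstep C1 s C2 -> lrule s \in Dl) ->
  star D (step D Dl) (unl C) (unl C').
Proof.
elim=> [C1 C2 [e1 e2]|C1 C2 C3 s ss' h1 _ IH] hD.
  by apply: star_refl; split=> //; apply: lproj_eq_map.
apply: star_step (lstep_step h1 (hD _ _ _ (mem_head _ _) h1)) (IH _).
by move=> y Ca Cb yin; apply: hD; rewrite in_cons yin orbT.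
Qed.

Lemma star_eqr (R : conf A Q -> conf A Q -> Prop) (c d d' : conf A Q) :
  star D R c d -> confeq D d d' -> star D R c d'.
Proof.
elim=> [c1 d1 e|c1 e d1 h1 _ IH] e'; first exact: star_refl (confeq_trans e e').
exact: star_step h1 (IH e').
Qed.

(* Runs record their rules, so that their lengths can be compared. *)
Definition ustep (r : rule A Q) (c e : conf A Q) := r \in Delta /\ step D [:: r] c e.

Inductive urun : conf A Q -> seq (rule A Q) -> conf A Q -> Prop :=
| urun_nil c d : confeq D c d -> urun c [::] d
| urun_cons c e d r rs : ustep r c e -> urun e rs d -> urun c (r :: rs) d.

Lemma urun_eql c0 c rs d : confeq D c0 c -> urun c rs d -> urun c0 rs d.
Proof.
move=> e0 h; case: h e0 => [c1 d1 e1|c1 e d1 r rs' [rD hs] hr] e0.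
  exact: urun_nil (confeq_trans e0 e1).
exact: urun_cons (conj rD (step_eql e0 hs)) hr.
Qed.

Lemma urun_eqr c rs d d' : urun c rs d -> confeq D d d' -> urun c rs d'.
Proof.
elim=> [c1 d1 e|c1 e1 d1 r rs' h1 _ IH] e'; first exact: urun_nil (confeq_trans e e').
exact: urun_cons h1 (IH e').
Qed.

Lemma urun_cat c rs1 e rs2 d : urun c rs1 e -> urun e rs2 d -> urun c (rs1 ++ rs2) d.
Proof.
elim=> [c1 d1 e1|c1 e1 d1 r rs h1 _ IH] h /=; first exact: urun_eql e1 h.
exact: urun_cons h1 (IH h).
Qed.

Lemma star_urun c d : star D (step D Delta) c d -> exists rs, urun c rs d.
Proof.
elim=> [c1 d1 e|c1 e d1 [a [w [x [h1 h2]]]] _ [rs hr]].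
  by exists [::]; apply: urun_nil.
exists ((c1.1, a, w, e.1) :: rs); apply: urun_cons hr; split=> //.
by exists a, w, x; rewrite mem_seq1.
Qed.

Lemma lrun_urun C ss C' : lrun C ss C' -> urun (unl C) (map lrule ss) (unl C').
Proof.
elim=> [C1 C2 [e1 e2]|C1 C2 C3 s ss' h1 _ IH] /=.
  by apply: urun_nil; split=> //; apply: lproj_eq_map.
apply: urun_cons IH; have [sD _ _] := h1; split=> //.
by apply: lstep_step h1 _; rewrite mem_seq1.
Qed.

Definition classes (rs : seq (rule A Q)) :=
  [seq twins D r.1.1.2 | r <- rs & r.1.2 != [::]].
Definition lclasses (ks : seq (occ * seq occ)) :=
  [seq twins D k.1.1 | k <- ks & k.2 != [::]].

Lemma lrun_classes C ss C' :
  lrun C ss C' -> classes (map lrule ss) = lclasses (map lkey ss).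
Proof.
elim=> [//|C1 C2 C3 s ss' [_ e _] _]; rewrite /classes /lclasses /= e /=.
by case: (lpush s) => [|w W] /= ->.
Qed.

Lemma lclasses_perm ks ks' : perm_eq ks ks' -> lclasses ks =i lclasses ks'.
Proof. by move=> p; apply/perm_mem/perm_map/perm_filter. Qed.

Lemma lclasses_cons k ks : lclasses (k :: ks) =
  (if k.2 != [::] then [:: twins D k.1.1] else [::]) ++ lclasses ks.
Proof. by rewrite /lclasses /=; case: ifP. Qed.

Lemma lclasses_cat ks1 ks2 : lclasses (ks1 ++ ks2) = lclasses ks1 ++ lclasses ks2.
Proof. by rewrite /lclasses filter_cat map_cat. Qed.

Definition minimal (S : seq {set A}) C ss C' :=
  [/\ lrun C ss C', {subset lclasses (map lkey ss) <= S} &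
      forall rs, urun (unl C) rs (unl C') -> {subset classes rs <= S} -> size ss <= size rs].

Lemma minimal_perm S C ss ss' C' : minimal S C ss C' -> lrun C ss' C' ->
  perm_eq (map lkey ss) (map lkey ss') -> minimal S C ss' C'.
Proof.
case=> _ h2 h3 h p; split=> //.
  by move=> z; rewrite -(lclasses_perm p); apply: h2.
by move=> rs hr hc; rewrite -(size_map lkey ss') -(perm_size p) size_map; apply: h3.
Qed.

Lemma minimal_suffix S C pre post C' Cm :
  minimal S C (pre ++ post) C' -> lrun C pre Cm -> minimal S Cm post C'.
Proof.
case=> h1 h2 h3 hp.
have [Cm' [hp' hs]] := (lrun_cat C pre post C').1 h1.
split; first exact: lrun_eql (lrun_det hp hp') hs.
  by move=> z zl; apply: h2; rewrite map_cat lclasses_cat mem_cat zl orbT.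
move=> rs hr hc.
have := h3 (map lrule pre ++ rs) (urun_cat (lrun_urun hp) hr).
rewrite !size_cat size_map leq_add2l; apply=> z.
rewrite /classes filter_cat map_cat mem_cat -/(classes _) -/(classes _) (lrun_classes hp).
by case/orP=> [zl|/hc //]; apply: h2; rewrite map_cat lclasses_cat mem_cat zl.
Qed.

Lemma minimal_le S C ss C' ss' : minimal S C ss C' -> lrun C ss' C' ->
  {subset lclasses (map lkey ss') <= S} -> size ss <= size ss'.
Proof.
case=> _ _ hmin hr hc; rewrite -(size_map lrule ss').
by apply: hmin (lrun_urun hr) _; rewrite (lrun_classes hr).
Qed.

(* The descendants of [lpush s] form the top of the stack. *)
Lemma desc_pop_closed C s pre t post C' e :
  lrun C (s :: pre ++ t :: post) C' -> fresh C (s :: pre ++ t :: post) ->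
  e \in desc (lpush s) pre -> Docc (lpop t) e -> lpop t \in desc (lpush s) pre.
Proof.
case/lrun_consE=> C1 [hs /lrun_cat [Ct [hpre /lrun_consE [Ct1 [ht _]]]]] fr eD d.
have [iv sub] := up_closed_desc_push hs hpre (fresh_catl (pre := s :: pre) fr).
have uCt : uniq Ct.2 by apply/fresh_uniq/(fresh_catr hpre (fresh_cons hs fr)).
have [<-|ne] := eqVneq e (lpop t); first by [].
exact: iv _ _ (lpop_mem ht) (lpop_above ht uCt (sub _ eD) ne d) eD.
Qed.

(* [f] is moved next to [s] past independent transitions, then absorbed. *)
Lemma lrun_absorb C s mid f post C' :
  lrun C (s :: mid ++ f :: post) C' -> fresh C (s :: mid ++ f :: post) ->
  all (fun y => lpop y \notin lpush s) mid -> lpop f \in lpush s -> lpush f = [::] ->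
  exists s' mid', [/\ lrun C (s' :: mid' ++ post) C', map lkey mid' = map lkey mid,
                      lpop s' = lpop s & {subset lpush s' <= lpush s}].
Proof.
move=> hrun fr hmid fin fW; have hrun0 := hrun.
case/lrun_consE: hrun => C1 [hs hrest].
have indep x : x \in mid -> lpop f \notin lpush x /\ ~~ Docc (lpop x) (lpop f).
  move=> xm; split; first by apply: fresh_disj fr _ fin; rewrite mem_cat xm.
  have [m1 [m2 [em _]]] := mem_split_first xm.
  have xnW : lpop x \notin lpush s by apply: (allP hmid); rewrite em mem_cat mem_head orbT.
  have em1 : desc (lpush s) m1 = lpush s.
    by apply: desc_id; apply/allP=> y ym; apply: (allP hmid); rewrite em mem_cat ym.
  rewrite em -catA /= in hrun0 fr; apply: contra xnW => d.
  by rewrite -em1; apply: (desc_pop_closed hrun0 fr (e := lpop f)); rewrite ?em1.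
have [f' [mid' [h1 [ef1 ef2] em]]] := lrun_move_front hrest indep.
rewrite -ef1 in fin; rewrite -ef2 in fW.
have [s' [W1 [W2 [h2 es eW eW']]]] := lrun_merge (lrun_cons hs h1) fW fin.
exists s', mid'; split=> // z; rewrite eW' eW !mem_cat in_cons.
by case/orP=> ->; rewrite ?orbT.
Qed.

(* Otherwise absorbing [f] into [s] would give a shorter run. *)
Lemma first_consumer_productive S C s mid f post C' :
  minimal S C (s :: mid ++ f :: post) C' -> fresh C (s :: mid ++ f :: post) ->
  all (fun y => lpop y \notin lpush s) mid -> lpop f \in lpush s -> lpush f != [::].
Proof.
move=> M fr hmid fin; apply/eqP=> fW; have [hrun hcls _] := M.
have [s' [mid' [h em es sW]]] := lrun_absorb hrun fr hmid fin fW.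
have sne : lpush s != [::] by apply: contraTneq fin => ->.
have sub : {subset lclasses (map lkey (s' :: mid' ++ post)) <= S}.
  move=> z; rewrite /= lclasses_cons map_cat em -map_cat mem_cat => hz; apply: hcls.
  rewrite /= lclasses_cons sne !map_cat !lclasses_cat /= lclasses_cons !mem_cat in hz *.
  rewrite in_cons !mem_cat; case/or3P: hz => [|->|->]; rewrite ?orbT //.
  by case: ifP => // _; rewrite es mem_seq1 => ->.
have := minimal_le M h sub.
by rewrite /= !size_cat /= -(size_map lkey mid') em size_map addnS ltnn.
Qed.

(* The first consumer of [lpush s] is non-erasing and its own pushes keep a
   descendant, by induction. *)
Lemma desc_nonempty S C s pre post C' :
  minimal S C (s :: pre ++ post) C' -> fresh C (s :: pre ++ post) ->
  lpush s != [::] -> exists e, e \in desc (lpush s) pre.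
Proof.
have [n lt_pre] := ubnP (size pre).
elim: n => // n IH in S C s pre post C' lt_pre *; move=> M fr ne.
case hp: (has (fun y => lpop y \in lpush s) pre); last first.
  by rewrite desc_id; [apply: nonnil_mem|apply/allP/hasPn; rewrite hp].
have [m1 [f [m2 [ep hm1 hf]]]] := has_split_first hp.
rewrite ep -catA /= in M fr; rewrite ep size_cat /= addnS !ltnS in lt_pre.
have m1N : all (fun y => lpop y \notin lpush s) m1 by apply/allP/hasPn.
have fne := first_consumer_productive M fr m1N hf.
have [hrun _ _] := M.
have [Cf [hpre _]] := (lrun_cat C (s :: m1) (f :: m2 ++ post) C').1 hrun.
have [e eD] := IH S Cf f m2 post C' (leq_ltn_trans (leq_addl _ _) lt_pre)
  (minimal_suffix (pre := s :: m1) M hpre) (fresh_catr hpre fr) fne.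
exists e; rewrite ep desc_cat (desc_id m1N) /=.
by apply: desc_mono eD => z zf; rewrite mem_desc_step hf zf orbT.
Qed.

Lemma lpop_in_desc S C s pre t post C' :
  minimal S C (s :: pre ++ t :: post) C' -> fresh C (s :: pre ++ t :: post) ->
  lpush s != [::] -> Dle (lpop s).1 (lpop t).1 -> lpop t \in desc (lpush s) pre.
Proof.
move=> M fr ne hD; have [e eD] := desc_nonempty M fr ne.
have [hrun _ _] := M.
case/lrun_consE: (hrun) => C1 [hs /lrun_cat [Ct [hpre _]]].
apply: (desc_pop_closed hrun fr eD).
by apply: hD; apply: (desc_Dle hpre (fun z => lpush_Dle hs) eD); apply: Drefl.
Qed.

(* Otherwise the first such consumer [f] is non-erasing and keeps a descendant
   on which the occurrence popped by [t] depends; so [t] would pop a descendant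
   of [f] instead of an occurrence pushed by [r]. *)
Lemma no_consumer_between S C r mid t post C' :
  minimal S C (r :: mid ++ t :: post) C' -> fresh C (r :: mid ++ t :: post) ->
  lpop t \in lpush r -> Dle (lpop r).1 (lpop t).1 ->
  all (fun y => lpop y \notin lpush r) mid.
Proof.
move=> M fr tin hD.
case hp: (has (fun y => lpop y \in lpush r) mid); last by apply/allP/hasPn; rewrite hp.
have [m1 [f [m2 [em hm1 hf]]]] := has_split_first hp.
rewrite em -catA /= in M fr.
have m1N : all (fun y => lpop y \notin lpush r) m1 by apply/allP/hasPn.
have fne := first_consumer_productive M fr m1N hf.
have [hrun _ _] := M.
case/lrun_consE: (hrun) => C1 [hsr _].
have [Cf [hpre _]] := (lrun_cat C (r :: m1) (f :: m2 ++ t :: post) C').1 hrun.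
have Mf := minimal_suffix (pre := r :: m1) M hpre; have frf := fresh_catr hpre fr.
have [e eD] := desc_nonempty Mf frf fne.
have [hrf _ _] := Mf; case/lrun_consE: (hrf) => Cf1 [hsf /lrun_cat [Ct [hm2 _]]].
have dte : Docc (lpop t) e.
  apply: hD; apply: (lpush_Dle hsr hf).
  by apply: (desc_Dle hm2 (fun z => lpush_Dle hsf) eD); apply: Drefl.
have := desc_sub (desc_pop_closed hrf frf eD dte).
have later y : y \in f :: m2 ++ t :: post -> lpop t \notin lpush y.
  by move=> yl; apply: fresh_disj fr _ tin; rewrite mem_cat yl orbT.
rewrite mem_cat => /orP[tf|/flatten_mapP [y ym ty]].
  by move: (later f (mem_head _ _)); rewrite tf.
by move: (later y); rewrite ty in_cons mem_cat ym orbT => /(_ isT).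
Qed.

Definition key_in_class (T : {set A}) (k : occ * seq occ) := (k.2 != [::]) && (k.1.1 \in T).
Definition in_class (T : {set A}) (s : ltrans) := key_in_class T (lkey s).

Lemma desc_pusher C s pre C1 C' b :
  lstep C s C1 -> lrun C1 pre C' -> b \in desc (lpush s) pre ->
  exists p1 r p2, [/\ s :: pre = p1 ++ r :: p2, b \in lpush r & Dle (lpop r).1 (lpop s).1].
Proof.
move=> hs hr; case/desc_origin=> [bs|[p1 [x [p2 [ep xD bx]]]]].
  by exists [::], s, pre; split=> // c.
exists (s :: p1), x, p2; rewrite ep; split=> //.
rewrite ep in hr; have [Cp [hp _]] := (lrun_cat _ _ _ _).1 hr.
exact: desc_Dle hp (fun z => lpush_Dle hs) _ xD.
Qed.

Section CommutePast.
Variables (S : seq {set A}) (C C' : lconf) (s1 x t : ltrans) (mid post : seq ltrans).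
Hypotheses (M : minimal S C (s1 :: mid ++ x :: t :: post) C')
           (fr : fresh C (s1 :: mid ++ x :: t :: post)).
Hypotheses (ne : lpush s1 != [::]) (tw : (lpop t).1 \in twins D (lpop s1).1).

Lemma lpop_in_desc_past : lpop t \in desc (lpush s1) (mid ++ [:: x]).
Proof.
have hD : Dle (lpop s1).1 (lpop t).1 by move=> c; rewrite (twinsP D _ _ tw).
have M' : minimal S C (s1 :: (mid ++ [:: x]) ++ t :: post) C' by rewrite -catA.
have fr' : fresh C (s1 :: (mid ++ [:: x]) ++ t :: post) by rewrite -catA.
exact: lpop_in_desc M' fr' ne hD.
Qed.

Lemma commute_past_push : ~~ in_class (twins D (lpop s1).1) x -> lpop t \notin lpush x.
Proof.
move=> nx; apply/negP=> tx; have := lpop_in_desc_past.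
rewrite desc_cat /= mem_desc_step tx andbT.
have [hrun _ _] := M.
case/lrun_consE: (hrun) => C1 [hs /lrun_cat [Cx [hm /lrun_consE [Cx1 [hx _]]]]].
case/orP=> [/andP[tD _]|xD].
  have [_ sub] := up_closed_desc_push hs hm (fresh_catl (pre := s1 :: mid) fr).
  move: (fresh_uniq_push (fresh_catr hm (fresh_cons hs fr))).
  by rewrite cat_uniq => /and3P[_ /hasP[]]; exists (lpop t); last exact: sub.
case/negP: nx; apply/andP; split=> /=; first by apply: contraTneq tx => ->.
apply/twinsP=> c; apply/idP/idP; first exact: (desc_Dle hm (fun z => lpush_Dle hs) xD).
by rewrite -(twinsP D _ _ tw); apply: (lpush_Dle hx tx).
Qed.

(* The occurrence popped by [t] was pushed by some [r] whose pushes stay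
   untouched up to [t]; an [x] popping a dependent occurrence would have to pop
   one of them. *)
Lemma commute_past_indep : lpop t \notin lpush x -> ~~ Docc (lpop x) (lpop t).
Proof.
move=> tx; apply/negP=> d; have := lpop_in_desc_past.
rewrite desc_cat /= mem_desc_step (negbTE tx) andbF orbF => /andP[tD _].
have [hrun _ _] := M.
case/lrun_consE: (hrun) => C1 [hs /lrun_cat [Cx [hm _]]].
have [p1 [r [p2 [ep tr hr]]]] := desc_pusher hs hm tD.
have M' := M; have fr' := fr; rewrite -cat_cons ep -catA /= in M' fr'.
have [hrun' _ _] := M'; have [Cr [hp1 _]] := (lrun_cat _ _ _ _).1 hrun'.
have Mr := minimal_suffix M' hp1; have frr := fresh_catr hp1 fr'.
have hDr : Dle (lpop r).1 (lpop t).1 by move=> c /hr; rewrite (twinsP D _ _ tw).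
have Mr' : minimal S Cr (r :: (p2 ++ [:: x]) ++ t :: post) C' by rewrite -catA.
have frr' : fresh Cr (r :: (p2 ++ [:: x]) ++ t :: post) by rewrite -catA.
have := no_consumer_between Mr' frr' tr hDr.
rewrite all_cat /= andbT => /andP[hp2 xr].
have [hrr _ _] := Mr.
have := desc_pop_closed hrr frr (e := lpop t); rewrite desc_id // => /(_ tr d).
by rewrite (negbTE xr).
Qed.

End CommutePast.

Lemma minimal_swap S C pre x t post C' :
  minimal S C (pre ++ x :: t :: post) C' -> fresh C (pre ++ x :: t :: post) ->
  lpop t \notin lpush x -> ~~ Docc (lpop x) (lpop t) ->
  exists x' t', [/\ minimal S C (pre ++ t' :: x' :: post) C',
                    fresh C (pre ++ t' :: x' :: post), lkey x' = lkey x & lkey t' = lkey t].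
Proof.
move=> M fr i1 i2; have [hrun _ _] := M.
have [Cm [h1 h2]] := (lrun_cat _ _ _ _).1 hrun.
have [x' [t' [h3 ex et]]] := lrun_swap h2 i1 i2.
have p : perm_eq (map lkey (pre ++ x :: t :: post)) (map lkey (pre ++ t' :: x' :: post)).
  by rewrite !map_cat perm_cat2l /= ex et; apply/permPl/(perm_catCA [:: lkey x] [:: lkey t]).
have h4 : lrun C (pre ++ t' :: x' :: post) C' by apply/lrun_cat; exists Cm.
by exists x', t'; split=> //; [apply: minimal_perm M h4 p|apply: fresh_perm fr p].
Qed.

Lemma move_class_step S C s1 P X t Y C' :
  minimal S C (s1 :: P ++ X ++ t :: Y) C' -> fresh C (s1 :: P ++ X ++ t :: Y) ->
  lpush s1 != [::] -> ~~ has (in_class (twins D (lpop s1).1)) X ->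
  in_class (twins D (lpop s1).1) t ->
  exists t' X', [/\ minimal S C (s1 :: P ++ t' :: X' ++ Y) C',
                    fresh C (s1 :: P ++ t' :: X' ++ Y),
                    lkey t' = lkey t & map lkey X' = map lkey X].
Proof.
elim/last_ind: X t Y => [|X x IH] t Y M fr ne hX ht; first by exists t, [::].
rewrite -cats1 has_cat /= orbF negb_or in hX; case/andP: hX => hX hx.
have e : P ++ rcons X x ++ t :: Y = (P ++ X) ++ x :: t :: Y by rewrite -cats1 -!catA.
rewrite e in M fr.
have tw : (lpop t).1 \in twins D (lpop s1).1 by case/andP: ht.
have i1 := commute_past_push M fr ne tw hx.
have [x' [t' [M' fr' ex et]]] :=
  minimal_swap (pre := s1 :: P ++ X) M fr i1 (commute_past_indep M fr ne tw i1).
rewrite /= -catA in M' fr'.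
have ht' : in_class (twins D (lpop s1).1) t' by rewrite /in_class et.
have [t'' [X'' [M'' fr'' et' eX]]] := IH t' (x' :: Y) M' fr' ne hX ht'.
exists t'', (rcons X'' x'); rewrite -!cats1 -catA !map_cat eX et' et /= ex.
by split.
Qed.

Lemma gather_class_steps S C s1 P R C' :
  minimal S C (s1 :: P ++ R) C' -> fresh C (s1 :: P ++ R) -> lpush s1 != [::] ->
  all (in_class (twins D (lpop s1).1)) P ->
  exists P' R', [/\ minimal S C (s1 :: P' ++ R') C', fresh C (s1 :: P' ++ R'),
     all (in_class (twins D (lpop s1).1)) P', ~~ has (in_class (twins D (lpop s1).1)) R'
     & perm_eq (map lkey (P ++ R)) (map lkey (P' ++ R'))].
Proof.
set T := twins D (lpop s1).1.
have [n lt_R] := ubnP (count (in_class T) R).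
elim: n => // n IH in P R lt_R *; move=> M fr ne hP.
case hR: (has (in_class T) R); last by exists P, R; rewrite hR.
have [X [t [Y [eR hX ht]]]] := has_split_first hR.
rewrite eR in M fr.
have [t' [X' [M' fr' et eX]]] := move_class_step M fr ne hX ht.
have e : P ++ t' :: X' ++ Y = rcons P t' ++ (X' ++ Y) by rewrite -cats1 -catA.
rewrite e in M' fr'.
have hP' : all (in_class T) (rcons P t') by rewrite all_rcons hP andbT /in_class et.
have hc : count (in_class T) (X' ++ Y) < n.
  have c0 l : ~~ has (in_class T) l -> count (in_class T) l = 0.
    by move=> h; apply/eqP; rewrite eqn0Ngt -has_count.
  have cX : count (in_class T) X' = 0.
    by rewrite -(count_map lkey (key_in_class T)) eX count_map c0.
  by move: lt_R; rewrite eR !count_cat cX c0 //= ht.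
have [P'' [R'' [M'' fr'' hP'' hR'' p]]] := IH _ _ hc M' fr' ne hP'.
exists P'', R''; split=> //; apply: perm_trans p.
rewrite eR -cats1 -catA !map_cat /= et eX perm_cat2l.
by apply/permPl/(perm_catCA (map lkey X) [:: lkey t] (map lkey Y)).
Qed.

Lemma lclasses_has a ks :
  twins D a \in lclasses ks -> has (key_in_class (twins D a)) ks.
Proof.
case/mapP=> k; rewrite mem_filter => /andP[kne kin] ea.
by apply/hasP; exists k; rewrite // /key_in_class kne ea twins_self.
Qed.

Lemma lclasses_twinsD ks : {subset lclasses ks <= twinsD D}.
Proof. by move=> T /mapP [k _ ->]; apply: twins_twinsD. Qed.

Lemma lrule_eps C s C1 : lstep C s C1 -> lpush s = [::] -> lrule s \in Delta_eps Delta.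
Proof. by case=> hD he _ e; rewrite mem_filter hD andbT he /= e. Qed.

Lemma lrule_T T C s C1 : lstep C s C1 -> in_class T s -> lrule s \in Delta_T Delta T.
Proof.
case=> hD he _; rewrite /in_class /key_in_class /= => /andP[h1 h2].
rewrite mem_filter hD andbT he /= h2 /=.
by move: h1; case: (lpush s).
Qed.

Lemma lrun_eps C ss C' : lrun C ss C' -> ~~ has (fun s => lpush s != [::]) ss ->
  star D (step_eps D Delta) (unl C) (unl C').
Proof.
move=> h /hasPn hss; apply: (lrun_star h) => s C1 C2 sin hs.
by apply: lrule_eps hs _; apply/eqP; have := hss s sin; rewrite negbK.
Qed.

Lemma lrun_class T C s ss C' : lrun C (s :: ss) C' -> all (in_class T) (s :: ss) ->
  rplus D (step_T D Delta T) (unl C) (unl C').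
Proof.
case/lrun_consE=> C1 [hs hr] /andP[h1 h2].
exists (unl C1); split; first exact: lstep_step hs (lrule_T hs h1).
by apply: (lrun_star hr) => y Ca Cb yin hy; apply: lrule_T hy (allP h2 y yin).
Qed.

(* Peel off the erasing prefix and the first non-erasing transition [s1];
   gather all later transitions of the twin class [T] of [s1] right behind
   it; what remains no longer uses [T] and is decomposed recursively. *)
Lemma minimal_decompose S C ss C' : minimal S C ss C' -> fresh C ss ->
  exists Ts, [/\ uniq Ts, {subset Ts <= lclasses (map lkey ss)} &
    rcomp (Vdash_seq D Delta Ts) (star D (step_eps D Delta)) (unl C) (unl C')].
Proof.
have [n lt_ss] := ubnP (size ss); elim: n => // n IH in C ss lt_ss *; move=> M fr.
have [hrun _ _] := M.
case hne: (has (fun s => lpush s != [::]) ss); last first.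
  exists [::]; split=> //; exists (unl C); split; first by split=> //; apply: tr_refl.
  by apply: lrun_eps hrun _; rewrite hne.
have [E1 [s1 [rest [ess hE1 hs1]]]] := has_split_first hne.
rewrite ess in M fr hrun lt_ss *.
have [Ca [hEa _]] := (lrun_cat _ E1 (s1 :: rest) _).1 hrun.
have := gather_class_steps (P := [::]) (minimal_suffix M hEa) (fresh_catr hEa fr) hs1 isT.
set T := twins D (lpop s1).1; case=> P [R [M1 fr1 hP hR]]; rewrite cat0s => p.
have [hrun1 _ _] := M1.
have [Cb [hPb _]] := (lrun_cat _ (s1 :: P) R _).1 hrun1.
have lt_R : size R < n.
  have := perm_size p; rewrite !size_map size_cat => e.
  rewrite size_cat /= e addnS ltnS in lt_ss.
  exact: leq_ltn_trans (leq_trans (leq_addl (size P) _) (leq_addl (size E1) _)) lt_ss.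
have [Ts [uTs sTs [e [hTs he]]]] :=
  IH Cb R lt_R (minimal_suffix (pre := s1 :: P) M1 hPb) (fresh_catr hPb fr1).
have TR : T \notin lclasses (map lkey R) by apply: contra hR => /lclasses_has; rewrite has_map.
exists (T :: Ts); split.
- by rewrite /= uTs andbT; apply: contra TR; apply: sTs.
- move=> z; rewrite map_cat lclasses_cat mem_cat /= lclasses_cons hs1 in_cons.
  case/orP=> [/eqP->|/sTs zR]; rewrite mem_cat; first by rewrite mem_head orbT.
  by rewrite (lclasses_perm p) map_cat lclasses_cat mem_cat zR !orbT.
exists e; split=> //; exists (unl Cb); split=> //; exists (unl Ca); split.
  exact: lrun_eps hEa hE1.
by apply: lrun_class hPb _; rewrite /= hP /in_class /key_in_class hs1 twins_self.
Qed.

Definition label (u : seq A) (N : nat) : seq occ := zip u (iota N (size u)).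

Lemma label_fst u N : map fst (label u N) = u.
Proof. by apply: unzip1_zip; rewrite size_iota. Qed.

Lemma label_snd u N : map snd (label u N) = iota N (size u).
Proof. by apply: unzip2_zip; rewrite size_iota. Qed.

Lemma ustep_lift r c e C N : ustep r c e -> confeq D (unl C) c ->
  uniq (map snd C.2) -> all (fun i => i < N) (map snd C.2) ->
  exists al C1, [/\ lstep C (r, al, label r.1.2 N) C1, confeq D (unl C1) e,
    uniq (map snd C1.2) & all (fun i => i < N + size r.1.2) (map snd C1.2)].
Proof.
case=> rD [a [w [x [er [hc he]]]]] [e1 eC] uC bC.
rewrite mem_seq1 in er; move/eqP: er => er; subst r.
have := tr_proj_eq Drefl Dsym (tr_trans eC hc).
case/(proj_eq_extract Drefl Dsym (u := [::])) => // Y1 [Y2 [eY hall hx]].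
have [U1 [al [U2 [eU eU1 eal eU2]]]] := map_split eY.
rewrite eU map_cat /= -cat1s uniq_catCA /= in uC.
have [nU uU] := andP uC; rewrite -map_cat in uU.
have bU : all (fun i => i < N) (map snd (U1 ++ U2)).
  by move: bC; rewrite eU !map_cat !all_cat /= => /and3P[-> _ ->].
exists al, (e.1, label w N ++ U1 ++ U2); split=> /=.
- split=> //=; first by rewrite label_fst eal -e1.
  exists (U1 ++ U2); split; last exact: proj_eq_refl.
  rewrite eU; apply: (proj_eq_bubble Docc_refl Docc_sym).
  by move: hall; rewrite /= -eU1 all_map -eal.
- split=> //; apply: tr_sym; apply: tr_trans he _.
  rewrite /= map_cat label_fst map_cat eU1 eU2.
  exact: tr_cat (tr_refl _ _) (proj_eq_tr Drefl Dsym hx).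
- rewrite map_cat label_snd uniq_catC; apply: (uniq_cat_sep uU (iota_uniq _ _) bU).
  by apply/allP=> i; rewrite mem_iota => /andP[].
- rewrite map_cat label_snd all_cat; apply/andP; split.
    by apply/allP=> i; rewrite mem_iota => /andP[].
  by apply: sub_all bU => i /= /leq_trans; apply; rewrite leq_addr.
Qed.

Lemma urun_lift c rs d C N : urun c rs d -> confeq D (unl C) c ->
  uniq (map snd C.2) -> all (fun i => i < N) (map snd C.2) ->
  exists ss C', [/\ lrun C ss C', map lrule ss = rs, confeq D (unl C') d,
    uniq (map snd (flatten (map lpush ss))) &
    all (fun i => N <= i) (map snd (flatten (map lpush ss)))].
Proof.
move=> h; elim: h C N => [c1 d1 e|c1 e1 d1 r rs' hs _ IH] C N eC uC bC.
  by exists [::], C; split=> //; [apply/lrun_nil/lconf_eq_refl|apply: confeq_trans eC e].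
have [al [C1 [st eC1 uC1 bC1]]] := ustep_lift hs eC uC bC.
have [ss [C' [h1 h2 h3 h4 h5]]] := IH C1 (N + size r.1.2) eC1 uC1 bC1.
exists ((r, al, label r.1.2 N) :: ss), C'; rewrite /= map_cat label_snd; split.
- exact: lrun_cons st h1.
- by rewrite h2.
- exact: h3.
- apply: uniq_cat_sep (iota_uniq _ _) h4 _ h5.
  by apply/allP=> i; rewrite mem_iota => /andP[].
- rewrite all_cat; apply/andP; split.
    by apply/allP=> i; rewrite mem_iota => /andP[].
  by apply: sub_all h5 => i; apply: leq_trans; rewrite leq_addr.
Qed.

Lemma minimal_lrun c d : star D (step D Delta) c d ->
  exists S C ss C', [/\ minimal S C ss C', fresh C ss, unl C = c & confeq D (unl C') d].
Proof.
case/star_urun=> rs hr; pose S := classes rs.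
have [rs0 [[hr0 hc0] hmin]] :=
  ex_minimal_size (P := fun rs' => urun c rs' d /\ {subset classes rs' <= S}) (conj hr (fun z h => h)).
pose C : lconf := (c.1, label c.2 0).
have eC : unl C = c by rewrite /unl /= label_fst -surjective_pairing.
have [|||ss [C' [hrun hmap eC' uF bF]]] := urun_lift (C := C) (N := size c.2) hr0.
- by rewrite eC; split=> //; apply: tr_refl.
- by rewrite label_snd iota_uniq.
- by rewrite label_snd; apply/allP=> i; rewrite mem_iota.
exists S, C, ss, C'; split=> //.
  split=> //; first by rewrite -(lrun_classes hrun) hmap; apply: hc0.
  move=> rs' hr' hc'; rewrite -(size_map lrule) hmap; apply: hmin; split=> //.
  by rewrite -eC; apply: urun_eqr hr' _.
apply: (map_uniq (f := snd)); rewrite map_cat label_snd; apply: uniq_cat_sep (iota_uniq _ _) uF _ bF.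
by apply/allP=> i; rewrite mem_iota.
Qed.

End LabelledRuns.

Theorem proposition5p11 (A Q : finType) (D : rel A)
  (Drefl : reflexive D) (Dsym : symmetric D)
  (Delta : seq (rule A Q))
  (Htp : trace_pushdown D Delta) (Hsat : saturated D Delta)
  (c d : conf A Q) :
  star D (step D Delta) c d ->
  exists Ts : seq {set A},
    size Ts <= TI D /\ all (fun T => T \in twinsD D) Ts /\
    rcomp (Vdash_seq D Delta Ts) (star D (step_eps D Delta)) c d.
Proof.
case/(minimal_lrun Drefl Dsym)=> S [C [ss [C' [M fr <- eC']]]].
have [Ts [uTs sTs [e [hTs he]]]] := minimal_decompose Drefl Dsym Htp Hsat M fr.
have twTs : {subset Ts <= twinsD D} by move=> T /sTs; apply: lclasses_twinsD.
exists Ts; split; last split.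
- by rewrite /TI -(card_uniqP uTs); apply/subset_leq_card/subsetP.
- exact/allP.
- by exists e; split=> //; apply: star_eqr he eC'.
Qed.
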